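(* Let $S$ be a positive integer and let $v\in\mathbb{R}^n$ be a vector with at least $S$ magnitudes. Let $p=(p_1,\dots,p_n)\in[1/3,2/3]^n$ and let $w=(w_1,\dots,w_n)\in\{\pm1\}^n$ be a random vector with independent entries, where $\Pr[w_i=1]=p_i$ and $\Pr[w_i=-1]=1-p_i$ for each $i\in[n]$. Then for every $\alpha\in\mathbb{R}$, \[\Pr\big[\langle v,w\rangle=\alpha\big]\le\left(\tfrac{2}{3}\right)^{\lceil S/2\rceil}.\]
   Context: A non-zero real number $x$ has magnitude $j\in\mathbb{Z}$ if $10^j\le|x|<10^{j+1}$. A vector $v$ has at least $S$ magnitudes if there exist $S$ non-zero entries of $v$ with pairwise distinct magnitudes. *)

From HB Require Import structures.
From mathcomp Require Import all_boot all_order all_algebra.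
From mathcomp Require Import all_reals.
Set Implicit Arguments. Unset Strict Implicit. Unset Printing Implicit Defensive.
Import Order.TTheory GRing.Theory Num.Theory.
Local Open Scope ring_scope.

Definition has_magnitude (R : realFieldType) (x : R) (j : int) : Prop :=
  x != 0 /\ (10%:R ^ j <= `|x|) /\ (`|x| < 10%:R ^ (j + 1)).

Definition at_least_magnitudes (R : realFieldType) (n : nat) (v : 'rV[R]_n)
  (S : nat) : Prop :=
  exists (I : {set 'I_n}) (mag : 'I_n -> int),
    #|I| = S /\
    (forall i, i \in I -> has_magnitude (v 0 i) (mag i)) /\
    {in I &, injective mag}.

Definition sgn_of (R : ringType) (b : bool) : R := if b then 1 else -1.

Definition prob_w (R : ringType) (n : nat) (p : 'rV[R]_n)
  (w : {ffun 'I_n -> bool}) : R :=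
  \prod_(i < n) (if w i then p 0 i else 1 - p 0 i).

Definition prob_inner_eq (R : realFieldType) (n : nat) (p v : 'rV[R]_n)
  (alpha : R) : R :=
  \sum_(w : {ffun 'I_n -> bool} | \sum_(i < n) v 0 i * sgn_of R (w i) == alpha)
     prob_w p w.

From HB Require Import structures.
From mathcomp Require Import all_boot all_order all_algebra.
From mathcomp Require Import all_reals.
From mathcomp Require Import ring lra zify.
Set Implicit Arguments. Unset Strict Implicit. Unset Printing Implicit Defensive.
Import Order.TTheory GRing.Theory Num.Theory.
Local Open Scope ring_scope.

(* Keep a subset B of the entries whose magnitudes pairwise differ by at least
   2; greedily this loses at most half of them.  Entries of B then dominate
   each other geometrically: the largest one exceeds (in absolute value) the
   sum of all smaller ones, so two sign vectors that differ somewhere on B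
   give different values of <v, w>.  Hence, conditioning on the signs off B,
   at most one choice of the signs on B hits alpha, an event of probability
   at most (2/3)^|B| <= (2/3)^(ceil(S/2)). *)

Lemma exists_max_in (I : finType) (mag : I -> int) (A : {set I}) (a : I) :
  a \in A -> exists2 i, i \in A & {in A, forall j, mag j <= mag i}.
Proof.
move=> aA; case: (arg_maxP mag aA) => i iA max_i.
by exists i => // j jA; apply: max_i.
Qed.

Section Spread.

Variables (I : finType) (mag : I -> int).

Definition spread (A : {set I}) :=
  {in A &, forall a b, a != b -> mag a <= mag b -> mag a + 2 <= mag b}.

Lemma spread_below_max (A U : {set I}) (i : I) :
  spread A -> U \subset A -> i \in U -> {in U, forall j, mag j <= mag i} ->
  {in U :\ i, forall j, mag j <= mag i - 2}.
Proof.
move=> A_spread UA iU max_i j; rewrite !inE => /andP[ji jU].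
have := A_spread j i (subsetP UA j jU) (subsetP UA i iU) ji (max_i j jU).
lia.
Qed.

Lemma card_fiber_le1 (A : {set I}) (m : int) :
  {in A &, injective mag} -> (#|[set j in A | mag j == m]| <= 1)%N.
Proof.
move=> mag_inj; case: (set_0Vmem [set j in A | mag j == m]) => [->|[j0]].
  by rewrite cards0.
rewrite inE => /andP[j0A /eqP mj0]; rewrite -(cards1 j0).
apply/subset_leq_card/subsetP => j; rewrite !inE => /andP[jA /eqP mj].
by apply/eqP/mag_inj; rewrite ?mj ?mj0.
Qed.

Lemma spread_subset_half (A : {set I}) :
  {in A &, injective mag} ->
  exists B : {set I}, [/\ B \subset A, ((#|A|.+1)./2 <= #|B|)%N & spread B].
Proof.
have [k] := ubnP #|A|; elim: k A => // k IH A ltAk mag_inj.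
case: (set_0Vmem A) => [->|[a aA]].
  by exists set0; split; rewrite ?sub0set ?cards0 // => ?; rewrite inE.
have [i iA max_i] := exists_max_in mag aA.
pose J := [set j in A | mag j + 2 <= mag i].
have JA : J \subset A by apply/subsetP => j; rewrite inE => /andP[].
have iNJ : i \notin J by rewrite inE iA /=; lia.
have ltJA : (#|J| < #|A|)%N.
  by apply/proper_card/properP; split => //; exists i.
have cardA : (#|A| <= #|J| + 2)%N.
  rewrite -(cardsID J A) (setIidPr JA) leq_add2l.
  have top2 : A :\: J \subset
      [set j in A | mag j == mag i] :|: [set j in A | mag j == mag i - 1].
    apply/subsetP => j; rewrite !inE => /andP[jNJ jA]; rewrite jA /= in jNJ *.
    by have := max_i j jA; lia.
  apply: leq_trans (subset_leq_card top2) _; rewrite cardsU.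
  have := card_fiber_le1 (mag i) mag_inj.
  have := card_fiber_le1 (mag i - 1) mag_inj; lia.
have [B [BJ halfB spreadB]] :=
  IH J (leq_trans ltJA ltAk) (sub_in2 (subsetP JA) mag_inj).
have below_i j : j \in B -> mag j + 2 <= mag i.
  by move/(subsetP BJ); rewrite inE => /andP[].
exists (i |: B); split.
- by rewrite subUset sub1set iA (subset_trans BJ JA).
- rewrite cardsU1 (contra (subsetP BJ i) iNJ) add1n.
  apply: leq_trans (half_leq (_ : #|A|.+1 <= #|J|.+3)%N) _; first lia.
  by rewrite /= ltnS.
- move=> b c; rewrite !inE => /orP[/eqP->|bB] /orP[/eqP->|cB];
    rewrite ?eqxx // => neq_bc.
  + by have := below_i c cB; lia.
  + by have := below_i b bB; lia.
  + exact: spreadB.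
Qed.

End Spread.

Section SpreadSums.

Variables (R : realFieldType) (I : finType) (x : I -> R) (mag : I -> int).
Variable A : {set I}.
Hypothesis x_mag : {in A, forall i, has_magnitude (x i) (mag i)}.
Hypothesis A_spread : spread mag A.

Lemma spread_sum_norm_lt (U : {set I}) (M : int) :
  U \subset A -> {in U, forall j, mag j <= M} ->
  \sum_(j in U) `|x j| < 2 * 10%:R ^ (M + 1).
Proof.
have [k] := ubnP #|U|; elim: k U M => // k IH U M ltUk UA le_M.
case: (set_0Vmem U) => [->|[u uU]].
  by rewrite big_set0 mulr_gt0 // exprz_gt0.
have [i iU max_i] := exists_max_in mag uU.
have iA : i \in A := subsetP UA i iU.
have rest_below := spread_below_max A_spread UA iU max_i.
have lt_rest := IH (U :\ i) (mag i - 2)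
  (leq_trans (proper_card (properD1 iU)) ltUk)
  (subset_trans (subsetDl U [set i]) UA) rest_below.
have [_ [_ lt_xi]] := x_mag iA.
set t := (10%:R : R) ^ (mag i - 2 + 1) in lt_rest.
have t_gt0 : 0 < t by rewrite exprz_gt0.
have pow_i : (10%:R : R) ^ (mag i + 1) = t * 10%:R ^ 2%:Z.
  by rewrite -expfzDr ?pnatr_eq0 //; congr (_ ^ _); lia.
have le_top : t * 10%:R ^ 2%:Z <= (10%:R : R) ^ (M + 1).
  rewrite -expfzDr ?pnatr_eq0 //.
  have -> : mag i - 2 + 1 + 2%:Z = mag i + 1 by lia.
  by apply: ler_weXz2l; [rewrite ler1n | have := le_M i iU; lia].
rewrite (big_setD1 _ iU) /=; lra.
Qed.

Lemma spread_signed_sum_neq0 (U : {set I}) (e : I -> R) :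
  U \subset A -> U != set0 -> {in U, forall j, `|e j| = 1} ->
  \sum_(j in U) x j * e j != 0.
Proof.
move=> UA /set0Pn[u uU] e_unit.
have [i iU max_i] := exists_max_in mag uU.
have iA : i \in A := subsetP UA i iU.
have rest_below := spread_below_max A_spread UA iU max_i.
have lt_rest := spread_sum_norm_lt (subset_trans (subsetDl U [set i]) UA)
  rest_below.
have le_rest : `|\sum_(j in U :\ i) x j * e j| <= \sum_(j in U :\ i) `|x j|.
  apply: le_trans (ler_norm_sum _ _ _) (ler_sum _ _) => j jU.
  by rewrite normrM e_unit ?mulr1 // (subsetP (subsetDl U [set i])).
have [_ [le_xi _]] := x_mag iA.
set t := (10%:R : R) ^ (mag i - 2 + 1) in lt_rest.
have t_gt0 : 0 < t by rewrite exprz_gt0.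
have pow_i : (10%:R : R) ^ mag i = t * 10%:R ^ 1%:Z.
  by rewrite -expfzDr ?pnatr_eq0 //; congr (_ ^ _); lia.
rewrite (big_setD1 _ iU) /= addr_eq0; apply/eqP => dominant.
move: (congr1 Num.norm dominant); rewrite normrN normrM e_unit // mulr1.
lra.
Qed.

End SpreadSums.

Lemma sgn_ofB_neq (R : ringType) (b b' : bool) :
  b != b' -> sgn_of R b - sgn_of R b' = 2%:R * sgn_of R b.
Proof.
case: b; case: b' => //= _; rewrite /sgn_of ?mulr1 ?mulrN1 ?opprK //.
by rewrite -opprD.
Qed.

Lemma normr_sgn_of (R : numDomainType) (b : bool) : `|sgn_of R b| = 1.
Proof. by case: b; rewrite /sgn_of ?normrN normr1. Qed.

Lemma spread_sgn_sum_inj (R : realFieldType) (n : nat) (v : 'rV[R]_n)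
    (mag : 'I_n -> int) (A : {set 'I_n}) :
  {in A, forall i, has_magnitude (v 0 i) (mag i)} -> spread mag A ->
  forall w w' : {ffun 'I_n -> bool}, (forall i, i \notin A -> w i = w' i) ->
  \sum_(i < n) v 0 i * sgn_of R (w i) = \sum_(i < n) v 0 i * sgn_of R (w' i) ->
  w = w'.
Proof.
move=> v_mag A_spread w w' agree eq_sums; apply/ffunP => i; apply/eqP.
apply: contraT => neq_i.
pose D := [set j | w j != w' j].
have DA : D \subset A.
  by apply/subsetP => j; rewrite inE; apply: contraR => /agree ->.
have D_neq0 : D != set0 by apply/set0Pn; exists i; rewrite inE.
have diff_sum : \sum_(j < n) v 0 j * (sgn_of R (w j) - sgn_of R (w' j)) =
    2%:R * \sum_(j in D) v 0 j * sgn_of R (w j).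
  rewrite (bigID (mem D)) /= [X in _ + X]big1 ?addr0 => [|j]; last first.
    by rewrite inE negbK => /eqP->; rewrite subrr mulr0.
  rewrite mulr_sumr; apply: eq_bigr => j; rewrite inE => /sgn_ofB_neq->.
  by rewrite mulrCA.
have /negP[] := spread_signed_sum_neq0 v_mag A_spread DA D_neq0
  (fun j _ => normr_sgn_of R (w j)).
have := diff_sum; under eq_bigr do rewrite mulrBr.
by rewrite sumrB eq_sums subrr => /esym/eqP; rewrite mulf_eq0 pnatr_eq0.
Qed.

Lemma prob_w_event_le (R : realFieldType) (n : nat) (p : 'rV[R]_n) (c : R)
    (A : {set 'I_n}) (E : pred {ffun 'I_n -> bool}) :
  c <= 1 -> (forall i, 1 - c <= p 0 i <= c) ->
  {in E &, forall w w' : {ffun 'I_n -> bool},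
    (forall i, i \notin A -> w i = w' i) -> w = w'} ->
  \sum_(w | E w) prob_w p w <= c ^+ #|A|.
Proof.
move=> c_le1 p_bounds E_inj.
pose q i (b : bool) := if b then p 0 i else 1 - p 0 i.
have q_ge0 i b : 0 <= q i b by have := p_bounds i; rewrite /q; case: b; lra.
have q_le i b : q i b <= c by have := p_bounds i; rewrite /q; case: b; lra.
(* [mu] is the law of [w] with every coordinate in [A] forced to [true]. *)
pose r i (b : bool) := if i \in A then (if b then 1 else 0) else q i b.
pose mu (u : {ffun 'I_n -> bool}) := \prod_(i < n) r i (u i).
pose force (w : {ffun 'I_n -> bool}) := [ffun i => (i \in A) || w i].
have r_ge0 i b : 0 <= r i b by rewrite /r; case: ifP => _ //; case: b.
have mu_ge0 u : 0 <= mu u by apply: prodr_ge0.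
have mu_sum1 : \sum_u mu u = 1.
  rewrite /mu -(bigA_distr_bigA r); apply: big1 => i _.
  by rewrite big_bool /r /q; case: ifP => _ /=; rewrite ?addr0 // addrC subrK.
have prob_le w : prob_w p w <= c ^+ #|A| * mu (force w).
  rewrite /prob_w /mu -prodr_const [X in _ <= X * _]big_mkcond -big_split /=.
  apply: ler_prod => i _; rewrite /r ffunE -/(q i (w i)) q_ge0.
  by case: (i \in A); rewrite ?mulr1 ?mul1r /= ?q_le.
have force_inj : {in E &, injective force}.
  move=> w w' Ew Ew' /ffunP eq_force; apply: E_inj => // i /negbTE iNA.
  by have := eq_force i; rewrite !ffunE iNA.
apply: le_trans (ler_sum _ (fun w _ => prob_le w)) _.
have cA_ge0 : 0 <= c ^+ #|A|.
  case: (set_0Vmem A) => [->|[i _]]; rewrite ?cards0 // exprn_ge0 //.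
  by have := p_bounds i; lra.
rewrite -mulr_sumr ler_piMr //.
rewrite (eq_bigl (mem E)) // -(big_imset mu force_inj) /= -mu_sum1.
by rewrite [X in _ <= X](bigID (mem (force @: E))) /= lerDl sumr_ge0.
Qed.

Theorem mainTheorem3 (R : realType) (n S : nat) (v p : 'rV[R]_n) (alpha : R) :
  (0 < S)%N ->
  at_least_magnitudes v S ->
  (forall i : 'I_n, 3^-1 <= p 0 i <= 2%:R / 3%:R) ->
  prob_inner_eq p v alpha <= (2%:R / 3%:R) ^+ (S.+1)./2.
Proof.
move=> _ [I [mag [<- [v_mag mag_inj]]]] p_bounds.
have [B [BI halfB B_spread]] := spread_subset_half mag_inj.
have B_mag : {in B, forall i, has_magnitude (v 0 i) (mag i)}.
  by move=> i /(subsetP BI); apply: v_mag.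
have p_bounds' i : 1 - 2%:R / 3%:R <= p 0 i <= 2%:R / 3%:R.
  by have := p_bounds i; rewrite (_ : 1 - 2%:R / 3%:R = 3^-1) //; field.
pose hits (w : {ffun 'I_n -> bool}) :=
  \sum_(i < n) v 0 i * sgn_of R (w i) == alpha.
have hits_inj : {in hits &, forall w w' : {ffun 'I_n -> bool},
    (forall i, i \notin B -> w i = w' i) -> w = w'}.
  move=> w w'; rewrite !unfold_in => /eqP sum_w /eqP sum_w' agree.
  by apply: (spread_sgn_sum_inj B_mag B_spread agree); rewrite sum_w sum_w'.
apply: le_trans (prob_w_event_le _ p_bounds' hits_inj) _; first lra.
by apply: ler_wiXn2l halfB; lra.
Qed.
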